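(* Let $1\le k\le n$. There is no element $g\in\mathrm{Sp}(n,1)$ such that every element of $g\left(I_{n-k}\oplus\mathrm{Sp}(k,1)\right)g^{-1}$ has trace a complex number.
   Context: $\mathrm{Sp}(n,1)=\{A\in\mathrm{GL}(n+1,\mathbb H):A^*I_{n,1}A=I_{n,1}\}$ with $I_{n,1}=\mathrm{diag}(1,\dots,1,-1)$ ($n$ ones), $\mathbb H$ the quaternions. $I_{n-k}\oplus\mathrm{Sp}(k,1)$ denotes the subgroup of block-diagonal matrices $\mathrm{diag}(I_{n-k},B)$ with $I_{n-k}$ the identity matrix of size $n-k$ and $B\in\mathrm{Sp}(k,1)$ (defined analogously with $I_{k,1}$). The trace of a quaternionic matrix is the sum of its diagonal entries; ''complex number'' means an element of $\mathbb C=\mathbb R+\mathbb Ri\subset\mathbb H$. *)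

From HB Require Import structures.
From mathcomp Require Import all_boot all_order all_algebra.
From mathcomp Require Import ring.
From mathcomp Require Import reals.
Set Implicit Arguments. Unset Strict Implicit. Unset Printing Implicit Defensive.
Import Order.TTheory GRing.Theory Num.Theory.
Local Open Scope ring_scope.

(* The quaternions H = R + R i + R j + R k over a real field R.        *)
Record quat (R : realType) := Quat { q0 : R; q1 : R; q2 : R; q3 : R }.
Arguments Quat {R}.

Section Quat.
Variable R : realType.
Local Notation H := (quat R).

Definition quat_to (x : H) : R * R * R * R := (q0 x, q1 x, q2 x, q3 x).
Definition quat_of (x : R * R * R * R) : H :=
  let: (a, b, c, d) := x in Quat a b c d.
Lemma quat_toK : cancel quat_to quat_of. Proof. by case. Qed.

HB.instance Definition _ := Equality.copy H (can_type quat_toK).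
HB.instance Definition _ := Choice.copy H (can_type quat_toK).

Lemma quatP (x y : H) :
  q0 x = q0 y -> q1 x = q1 y -> q2 x = q2 y -> q3 x = q3 y -> x = y.
Proof. by case: x => ????; case: y => ???? /= -> -> -> ->. Qed.

Definition qzero : H := Quat 0 0 0 0.
Definition qopp (x : H) : H := Quat (- q0 x) (- q1 x) (- q2 x) (- q3 x).
Definition qadd (x y : H) : H :=
  Quat (q0 x + q0 y) (q1 x + q1 y) (q2 x + q2 y) (q3 x + q3 y).
Definition qone : H := Quat 1 0 0 0.
Definition qmul (x y : H) : H :=
  Quat (q0 x * q0 y - q1 x * q1 y - q2 x * q2 y - q3 x * q3 y)
       (q0 x * q1 y + q1 x * q0 y + q2 x * q3 y - q3 x * q2 y)
       (q0 x * q2 y - q1 x * q3 y + q2 x * q0 y + q3 x * q1 y)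
       (q0 x * q3 y + q1 x * q2 y - q2 x * q1 y + q3 x * q0 y).

Lemma qaddA : associative qadd.
Proof. by move=> x y z; apply: quatP => /=; ring. Qed.
Lemma qaddC : commutative qadd.
Proof. by move=> x y; apply: quatP => /=; ring. Qed.
Lemma qadd0 : left_id qzero qadd.
Proof. by move=> x; apply: quatP => /=; ring. Qed.
Lemma qaddN : left_inverse qzero qopp qadd.
Proof. by move=> x; apply: quatP => /=; ring. Qed.

HB.instance Definition _ := GRing.isZmodule.Build H qaddA qaddC qadd0 qaddN.

Lemma qmulA : associative qmul.
Proof. by move=> x y z; apply: quatP => /=; ring. Qed.
Lemma qmul1 : left_id qone qmul.
Proof. by move=> x; apply: quatP => /=; ring. Qed.
Lemma qmulr1 : right_id qone qmul.
Proof. by move=> x; apply: quatP => /=; ring. Qed.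
Lemma qmulDl : left_distributive qmul +%R.
Proof. by move=> x y z; apply: quatP => /=; ring. Qed.
Lemma qmulDr : right_distributive qmul +%R.
Proof. by move=> x y z; apply: quatP => /=; ring. Qed.
Lemma qone_neq0 : qone != 0.
Proof. by apply/eqP => /(congr1 (@q0 R)) /= /eqP; rewrite oner_eq0. Qed.

HB.instance Definition _ :=
  GRing.Zmodule_isNzRing.Build H qmulA qmul1 qmulr1 qmulDl qmulDr qone_neq0.

Definition qconj (x : H) : H := Quat (q0 x) (- q1 x) (- q2 x) (- q3 x).

Definition is_complex (x : H) : Prop := q2 x = 0 /\ q3 x = 0.

End Quat.

Definition qadj (R : realType) m n (A : 'M[quat R]_(m, n)) : 'M[quat R]_(n, m) :=
  \matrix_(i, j) qconj (A j i).

Definition Inn1 (R : realType) (n : nat) : 'M[quat R]_n.+1 :=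
  \matrix_(i, j) if i == j then (if (i < n)%N then 1 else -1) else 0.

Definition inSp (R : realType) (n : nat) (A : 'M[quat R]_n.+1) : Prop :=
  (exists B : 'M[quat R]_n.+1, A *m B = 1%:M /\ B *m A = 1%:M) /\
  qadj A *m Inn1 R n *m A = Inn1 R n.

(* For B of size k+1, the block-diagonal matrix diag(I_{n-k}, B) of size n+1
   (meaningful when k <= n). *)
Definition blockI (R : realType) (n k : nat) (B : 'M[quat R]_k.+1)
  : 'M[quat R]_n.+1 :=
  \matrix_(i, j)
    if ((i < n - k)%N || (j < n - k)%N) then (i == j)%:R
    else B (inord (i - (n - k))) (inord (j - (n - k))).

From HB Require Import structures.
From mathcomp Require Import all_boot all_order all_algebra.
From mathcomp Require Import reals.
From mathcomp Require Import ring lra zify.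
Import Order.TTheory GRing.Theory Num.Theory.
Local Open Scope ring_scope.
Set Implicit Arguments. Unset Strict Implicit.

(* Take B = diag(1, ..., 1, e) with e a unit quaternion; then
   diag(I_{n-k}, B) = diag(1, ..., 1, e) and g^-1 = I_{n,1} g^* I_{n,1}.  With
   a_i the last column of g and s_i = +-1 the signature of I_{n,1}, the
   j-component of tr (g diag(1, ..., 1, e) g^-1) is -<sum_i s_i a_i^* j a_i, e>.
   If it vanishes for every unit e, then a_n^* j a_n = sum_(i<n) a_i^* j a_i.
   Since |a^* j a| = |a|^2, the triangle inequality then contradicts the
   (n, n) entry |a_n|^2 = 1 + sum_(i<n) |a_i|^2 of g^* I_{n,1} g = I_{n,1}. *)

Definition sgn_Inn1 (V : pzRingType) n (i : 'I_n.+1) : V :=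
  if i == ord_max then -1 else 1.
Arguments sgn_Inn1 {V n} i.

Lemma sum_sgn_Inn1 (V : pzRingType) n (F : 'I_n.+1 -> V) :
  \sum_i sgn_Inn1 i * F i = \sum_(i < n) F (widen_ord (leqnSn n) i) - F ord_max.
Proof.
rewrite big_ord_recr /= /sgn_Inn1 eqxx mulN1r; congr (_ - _).
by apply: eq_bigr => i _; rewrite ifF ?mul1r // -val_eqE /= ltn_eqF.
Qed.

Section Quaternions.
Variable R : realType.
Local Notation H := (quat R).

Lemma qmulE (x y : H) : x * y = qmul x y. Proof. by []. Qed.
Lemma qoppE (x : H) : - x = qopp x. Proof. by []. Qed.

Definition qdot (x y : H) : R :=
  q0 x * q0 y + q1 x * q1 y + q2 x * q2 y + q3 x * q3 y.
Definition qnorm2 (x : H) : R := qdot x x.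
(* [jconjg a] reads off the j-component of conjugation by a:
   q2 (a * e * qconj a) = qdot (jconjg a) e. *)
Definition jconjg (a : H) : H := qconj a * Quat 0 0 1 0 * a.

Lemma qnorm2_ge0 (x : H) : 0 <= qnorm2 x.
Proof. rewrite /qnorm2 /qdot; nra. Qed.

Lemma q0_sum I r P (F : I -> H) :
  q0 (\sum_(i <- r | P i) F i) = \sum_(i <- r | P i) q0 (F i).
Proof. exact: (big_morph (@q0 R)). Qed.

Lemma q2_sum I r P (F : I -> H) :
  q2 (\sum_(i <- r | P i) F i) = \sum_(i <- r | P i) q2 (F i).
Proof. exact: (big_morph (@q2 R)). Qed.

Lemma qdot_suml I r P (F : I -> H) y :
  qdot (\sum_(i <- r | P i) F i) y = \sum_(i <- r | P i) qdot (F i) y.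
Proof.
by apply: (big_morph (qdot ^~ y)) => [x z|]; rewrite /qdot /=; ring.
Qed.

Lemma qnorm2_jconjg (a : H) : qnorm2 (jconjg a) = qnorm2 a ^+ 2.
Proof. by rewrite /jconjg /qnorm2 /qdot !qmulE /=; ring. Qed.

Lemma qdot_jconjg_le (a b : H) :
  qdot (jconjg a) (jconjg b) <= qnorm2 a * qnorm2 b.
Proof.
(* qdot (jconjg a) (jconjg b) = qdot (c * j) (j * c) for c = b * qconj a. *)
pose c := b * qconj a.
have -> : qdot (jconjg a) (jconjg b)
          = qnorm2 a * qnorm2 b - 2 * (q1 c ^+ 2 + q3 c ^+ 2).
  by rewrite /c /jconjg /qnorm2 /qdot !qmulE /=; ring.
by rewrite lerBlDr lerDl; nra.
Qed.

Lemma qdot_units_eq0 (x : H) :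
  (forall e, qnorm2 e = 1 -> qdot x e = 0) -> x = 0.
Proof.
move=> x_orth; apply: quatP => /=; [move: (x_orth (Quat 1 0 0 0))
  | move: (x_orth (Quat 0 1 0 0)) | move: (x_orth (Quat 0 0 1 0))
  | move: (x_orth (Quat 0 0 0 1))]; rewrite /qnorm2 /qdot /=; lra.
Qed.

Lemma jconjg_sum_neq (I : finType) (a : I -> H) (b : H) :
  qnorm2 b = 1 + \sum_i qnorm2 (a i) -> jconjg b != \sum_i jconjg (a i).
Proof.
move=> norm_b; apply/eqP => jconjg_b.
have : qnorm2 b ^+ 2 <= (\sum_i qnorm2 (a i)) * qnorm2 b.
  rewrite -qnorm2_jconjg {1}/qnorm2 {1}jconjg_b qdot_suml mulr_suml.
  by apply: ler_sum => i _; apply: qdot_jconjg_le.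
have : 0 <= \sum_i qnorm2 (a i) by apply: sumr_ge0 => i _; apply: qnorm2_ge0.
nra.
Qed.

End Quaternions.

Section QuaternionMatrices.
Variable R : realType.
Local Notation H := (quat R).

Lemma qoneE : (1 : H) = Quat 1 0 0 0. Proof. by []. Qed.

Lemma qconj_mul_unit (e : H) : qnorm2 e = 1 -> qconj e * e = 1.
Proof.
move=> e_unit; rewrite qoneE -e_unit.
by apply: quatP; rewrite /qnorm2 /qdot /=; ring.
Qed.

Lemma mul_qconj_unit (e : H) : qnorm2 e = 1 -> e * qconj e = 1.
Proof.
move=> e_unit; rewrite qoneE -e_unit.
by apply: quatP; rewrite /qnorm2 /qdot /=; ring.
Qed.

Definition diag_last m (e : H) : 'M[H]_m.+1 :=
  diag_mx (\row_l if l == ord_max then e else 1).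

Lemma diag_last_mul m (e f : H) :
  diag_last m e *m diag_last m f = diag_last m (e * f).
Proof.
rewrite mulmx_diag; congr diag_mx.
by apply/rowP => l; rewrite !mxE; case: eqP; rewrite ?mulr1.
Qed.

Lemma diag_last1 m : diag_last m 1 = 1%:M.
Proof. by apply/matrixP => i j; rewrite !mxE if_same. Qed.

Lemma qadj_diag_last m (e : H) : qadj (diag_last m e) = diag_last m (qconj e).
Proof.
apply/matrixP => i j; rewrite !mxE.
have [<-|_] := eqVneq j i; rewrite ?mulr1n ?mulr0n.
  by case: eqP => // _; apply: quatP; rewrite /= ?oppr0.
by apply: quatP; rewrite /= ?oppr0.
Qed.

Lemma Inn1_diag_last n : Inn1 R n = diag_last n (-1).
Proof.
apply/matrixP => i j; rewrite !mxE.
have [_|_] := eqVneq i j; rewrite ?mulr1n ?mulr0n //.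
by rewrite ltn_neqAle -ltnS ltn_ord andbT -val_eqE /=; case: (_ == _).
Qed.

Lemma Inn1_mul_Inn1 n : Inn1 R n *m Inn1 R n = 1%:M.
Proof. by rewrite Inn1_diag_last diag_last_mul mulrNN mulr1 diag_last1. Qed.

Lemma diag_last_Sp m (e : H) : qnorm2 e = 1 -> inSp (diag_last m e).
Proof.
move=> e_unit; split.
  exists (diag_last m (qconj e)).
  by rewrite !diag_last_mul mul_qconj_unit ?qconj_mul_unit ?diag_last1.
rewrite Inn1_diag_last qadj_diag_last !diag_last_mul.
by rewrite mulrN1 mulNr qconj_mul_unit.
Qed.

Lemma blockI_diag_last n k (e : H) :
  (k <= n)%N -> blockI n (diag_last k e) = diag_last n e.
Proof.
move=> le_kn; apply/matrixP => i j; rewrite !mxE.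
case: ifP => [i_or_j_low|/negbT].
  have [ij|_] := eqVneq i j; last by rewrite mulr0n.
  move: i_or_j_low; rewrite -ij orbb => i_low.
  by rewrite mulr1n ifF // -val_eqE /= ltn_eqF //; lia.
rewrite negb_or -!leqNgt => /andP [i_high j_high].
have ilt := ltn_ord i; have jlt := ltn_ord j.
rewrite -!val_eqE /= !inordK; try lia.
have -> : (i - (n - k) == k)%N = (i == n :> nat) by apply/eqP/eqP; lia.
suff -> : (i - (n - k) == j - (n - k))%N = (i == j :> nat) by [].
by apply/eqP/eqP; lia.
Qed.

Lemma Sp_inv n (g ginv : 'M[H]_n.+1) :
  qadj g *m Inn1 R n *m g = Inn1 R n -> g *m ginv = 1%:M ->
  ginv = Inn1 R n *m qadj g *m Inn1 R n.
Proof.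
move=> Sp_g g_ginv.
have inv_g : Inn1 R n *m qadj g *m Inn1 R n *m g = 1%:M.
  by rewrite -!mulmxA (mulmxA (qadj g)) Sp_g Inn1_mul_Inn1.
by rewrite -[ginv]mul1mx -inv_g -mulmxA g_ginv mulmx1.
Qed.

Lemma Sp_last_col_qnorm2 n (g : 'M[H]_n.+1) :
  qadj g *m Inn1 R n *m g = Inn1 R n ->
  qnorm2 (g ord_max ord_max)
  = 1 + \sum_(i < n) qnorm2 (g (widen_ord (leqnSn n) i) ord_max).
Proof.
move/(congr1 (fun M : 'M[H]_n.+1 => q0 (M ord_max ord_max))).
rewrite Inn1_diag_last /diag_last mul_mx_diag !mxE eqxx mulr1n q0_sum.
rewrite (eq_bigr (fun i => sgn_Inn1 i * qnorm2 (g i ord_max))) => [|i _].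
  by rewrite sum_sgn_Inn1 qoneE qoppE /=; lra.
by rewrite !mxE /sgn_Inn1 /qnorm2 /qdot; case: (i == ord_max);
  rewrite ?qoneE ?qoppE !qmulE /=; ring.
Qed.

Lemma q2_tr_conj_diag_last n (g : 'M[H]_n.+1) (e : H) :
  q2 (\tr (g *m diag_last n e *m (Inn1 R n *m qadj g *m Inn1 R n)))
  = - qdot (\sum_i sgn_Inn1 i * jconjg (g i ord_max)) e.
Proof.
rewrite Inn1_diag_last /diag_last !mulmxA !mul_mx_diag /mxtrace.
rewrite q2_sum qdot_suml -sumrN; apply: eq_bigr => i _.
rewrite !mxE big_distrl q2_sum (bigD1 ord_max) // big1 ?addr0.
  by rewrite !mxE eqxx /sgn_Inn1 /jconjg /qdot; case: (i == ord_max);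
    rewrite ?qoneE ?qoppE !qmulE /=; ring.
move=> l /negbTE l_neq; rewrite !mxE l_neq.
by case: (i == ord_max); rewrite ?qoneE ?qoppE !qmulE /=; ring.
Qed.

End QuaternionMatrices.

Theorem proposition3p2 (R : realType) (n k : nat) :
  (1 <= k)%N -> (k <= n)%N ->
  ~ (exists (g ginv : 'M[quat R]_n.+1),
       inSp g /\ g *m ginv = 1%:M /\ ginv *m g = 1%:M /\
       forall B : 'M[quat R]_k.+1,
         inSp B -> is_complex (\tr (g *m blockI n B *m ginv))).
Proof.
move=> _ le_kn [g [ginv [[_ Sp_g] [g_ginv [_ tr_complex]]]]].
have signed_sum0 : \sum_i sgn_Inn1 i * jconjg (g i ord_max) = 0.
  apply: qdot_units_eq0 => e e_unit.
  have [q2_tr _] := tr_complex _ (diag_last_Sp k e_unit).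
  apply/eqP; rewrite -oppr_eq0 -q2_tr_conj_diag_last -(Sp_inv Sp_g g_ginv).
  by rewrite -(blockI_diag_last _ le_kn) q2_tr.
move/eqP: signed_sum0; rewrite sum_sgn_Inn1 subr_eq0 eq_sym.
exact/negP/jconjg_sum_neq/Sp_last_col_qnorm2.
Qed.
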